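(* Let $\sigma$ be a super filling of $\mathrm{dg}(\lambda)$ (order $<_2$) that is not $\Phi$-trivial, with distinguished label $a$ and with distinguished cell in row $r$. Suppose either (1) $\sigma$ is $\Phi$-nondegenerate and $u$ is the distinguished cell, or (2) $\sigma$ is $\Phi$-degenerate and $u$ is any cell of the degenerate segment with $|\sigma(u)|=a$. Then every non-degenerate triple containing $u$ is a quinv triple in $\Phi_u(\sigma)$ if and only if it is a quinv triple in $\sigma$.
   Context: Let $\lambda=(\lambda_1\ge\dots\ge\lambda_k>0)$ be a partition; $\mathrm{dg}(\lambda)=\{(r,i):1\le i\le k,1\le r\le\lambda_i\}$, $(r,i)$ being row $r$ from the bottom and column $i$ from the left (columns bottom-justified of heights $\lambda_i$). $\mathcal A=\{1,\bar1,2,\bar2,\dots\}$ consists of positive letters $i$ and negative letters $\bar i$, $|i|=|\bar i|=i$, totally ordered by $<_2$: $0<1<2<3<\cdots<\bar3<\bar2<\bar1$. $I(a,b)=1$ if $a>b$ or $a=b$ is negative, and $I(a,b)=0$ if $a<b$ or $a=b$ is positive. A super filling is $\sigma:\mathrm{dg}(\lambda)\to\mathcal A$. A triple is either three cells $(r+1,i),(r,i),(r,j)$ with $i<j$ (non-degenerate), or (degenerate) two cells $(r,i),(r,j)$ with $i<j$ and $\lambda_i=r$; with $a'=\sigma((r+1,i))$ ($a'=0$ if degenerate), $b=\sigma((r,i))$, $c=\sigma((r,j))$, it is a quinv triple iff exactly one of $I(a',b)=1$, $I(c,b)=0$, $I(a',c)=0$ holds. The reading order goes through rows top to bottom, each row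 right to left. $\Phi_u(\sigma)$ changes the sign of the entry in cell $u$. The distinguished label of $\sigma$ is the smallest positive integer $a$ such that some cell $(r,j)$ has $|\sigma((r,j))|=a$ and $r>a$; if none exists $\sigma$ is $\Phi$-trivial. Otherwise the distinguished cell is the first cell in reading order whose entry has absolute value $a$; $\sigma$ is $\Phi$-degenerate if the distinguished cell belongs to some degenerate triple and $\Phi$-nondegenerate otherwise. If $r$ is the row of the distinguished cell, the degenerate segment is the set of cells of row $r$ that belong to degenerate triples. *)

From mathcomp Require Import all_boot.
Set Implicit Arguments. Unset Strict Implicit. Unset Printing Implicit Defensive.

(* Letters of the super alphabet, plus the auxiliary letter 0 used for a'
   in degenerate triples.  [Pos n] is the positive letter n, [Neg n] is the
   negative letter \bar n. *)
Inductive letter := Zero | Pos of nat | Neg of nat.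

Definition labs (x : letter) : nat :=
  match x with Zero => 0 | Pos n => n | Neg n => n end.

Definition isNeg (x : letter) : bool := if x is Neg _ then true else false.

(* The total order <_2 : 0 < 1 < 2 < 3 < ... < \bar3 < \bar2 < \bar1. *)
Definition ltL (x y : letter) : bool :=
  match x, y with
  | Zero, Zero => false
  | Zero, _ => true
  | _, Zero => false
  | Pos m, Pos n => m < n
  | Pos _, Neg _ => true
  | Neg _, Pos _ => false
  | Neg m, Neg n => n < m
  end.

Definition eqL (x y : letter) : bool :=
  match x, y with
  | Zero, Zero => true
  | Pos m, Pos n => m == n
  | Neg m, Neg n => m == n
  | _, _ => false
  end.

Definition Ifun (a b : letter) : bool := ltL b a || (eqL a b && isNeg a).

Definition quinv_cond (a' b c : letter) : bool :=
  (Ifun a' b : nat) + (~~ Ifun c b : nat) + (~~ Ifun a' c : nat) == 1.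

Definition is_partition (la : seq nat) : Prop :=
  sorted geq la /\ all (fun x => 0 < x) la.

Definition lam (la : seq nat) (i : nat) : nat := nth 0 la i.-1.

(* (r, i) in dg(lambda): row r from the bottom, column i from the left. *)
Definition inDg (la : seq nat) (r i : nat) : bool :=
  (1 <= i <= size la) && (1 <= r <= lam la i).

Definition filling := nat -> nat -> letter.

Definition super_filling (la : seq nat) (sigma : filling) : Prop :=
  forall r i, inDg la r i -> 0 < labs (sigma r i).

Definition ndTriple (la : seq nat) (r i j : nat) : bool :=
  [&& i < j, inDg la r.+1 i, inDg la r i & inDg la r j].

Definition degTriple (la : seq nat) (r i j : nat) : bool :=
  [&& i < j, lam la i == r, inDg la r i & inDg la r j].

Definition ndTriple_contains (r i j : nat) (u : nat * nat) : bool :=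
  (u == (r.+1, i)) || (u == (r, i)) || (u == (r, j)).

Definition quinv_nd (sigma : filling) (r i j : nat) : bool :=
  quinv_cond (sigma r.+1 i) (sigma r i) (sigma r j).

Definition in_deg_triple (la : seq nat) (u : nat * nat) : Prop :=
  exists i j, degTriple la u.1 i j /\ (u.2 = i \/ u.2 = j).

(* Reading order: rows top to bottom, each row right to left.
   read_before c d : c strictly precedes d. *)
Definition read_before (c d : nat * nat) : bool :=
  (d.1 < c.1) || ((c.1 == d.1) && (d.2 < c.2)).

Definition flip (x : letter) : letter :=
  match x with Zero => Zero | Pos n => Neg n | Neg n => Pos n end.

Definition Phi (u : nat * nat) (sigma : filling) : filling :=
  fun r i => if (r, i) == u then flip (sigma r i) else sigma r i.

Definition dl_witness (la : seq nat) (sigma : filling) (a : nat) : Prop :=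
  exists r j, inDg la r j /\ labs (sigma r j) = a /\ a < r.

Definition distinguished_label (la : seq nat) (sigma : filling) (a : nat) : Prop :=
  0 < a /\ dl_witness la sigma a /\
  forall b, 0 < b -> b < a -> ~ dl_witness la sigma b.

Definition Phi_trivial (la : seq nat) (sigma : filling) : Prop :=
  forall a, 0 < a -> ~ dl_witness la sigma a.

Definition distinguished_cell (la : seq nat) (sigma : filling) (a : nat)
    (c : nat * nat) : Prop :=
  inDg la c.1 c.2 /\ labs (sigma c.1 c.2) = a /\
  forall d : nat * nat, inDg la d.1 d.2 -> labs (sigma d.1 d.2) = a ->
    ~~ read_before d c.

Definition in_deg_segment (la : seq nat) (r : nat) (u : nat * nat) : Prop :=
  u.1 = r /\ inDg la u.1 u.2 /\ in_deg_triple la u.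

From mathcomp Require Import all_boot zify.
Set Implicit Arguments.

(* The proof has a combinatorial half and a letter-level half.
   - Letters: a triple (a',b,c) keeps its quinv status when one entry of
     absolute value a changes sign, provided the other two entries are large
     enough (absolute value >= a or > a, depending on the position).
   - Filling: by minimality of a, every cell in a row >= a has |entry| >= a;
     since c is first in reading order among entries of absolute value a and
     sits above row a, every cell strictly above c's row, and every cell right
     of c in its row, has |entry| > a.  Finally, a cell whose upper neighbour
     exists is in no degenerate triple (partitions are weakly decreasing), so
     when u is the middle cell of the triple we are in case (1) and u = c. *)

Lemma quinv_flip_top a x y z :
  0 < a -> labs x = a -> a <= labs y -> a <= labs z ->
  quinv_cond (flip x) y z = quinv_cond x y z.
Proof.
case: x => [|m|m]; case: y => [|n|n]; case: z => [|k|k] //= a_pos lab_eq *; subst a;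
rewrite /quinv_cond /Ifun /=; lia.
Qed.

Lemma quinv_flip_mid a x y z :
  0 < a -> labs y = a -> a < labs x -> a < labs z ->
  quinv_cond x (flip y) z = quinv_cond x y z.
Proof.
case: x => [|m|m]; case: y => [|n|n]; case: z => [|k|k] //= a_pos lab_eq *; subst a;
rewrite /quinv_cond /Ifun /=; lia.
Qed.

Lemma quinv_flip_right a x y z :
  0 < a -> labs z = a -> a < labs x -> a <= labs y ->
  quinv_cond x y (flip z) = quinv_cond x y z.
Proof.
case: x => [|m|m]; case: y => [|n|n]; case: z => [|k|k] //= a_pos lab_eq *; subst a;
rewrite /quinv_cond /Ifun /=; lia.
Qed.

Lemma lam_mono la i k : is_partition la -> 1 <= i -> i <= k -> k <= size la ->
  lam la k <= lam la i.
Proof.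
move=> [sorted_la _] i_ge1 le_ik k_le; rewrite /lam.
apply: (@sorted_leq_nth _ geq _ _ 0 la sorted_la i.-1 k.-1); rewrite ?inE; try lia.
- by move=> x y z /= yx zy; apply: leq_trans zy yx.
- by move=> x /=.
Qed.

(* A cell with a cell directly above it belongs to no degenerate triple: as a
   left cell its column would have height r, as a right cell its column would
   be strictly higher than a column to its left. *)
Lemma no_deg_triple_below la r i : is_partition la -> inDg la r.+1 i ->
  ~ in_deg_triple la (r, i).
Proof.
move=> part /andP [/andP [i_ge1 i_le] /andP [_ r1_le]] [i' [j' [deg /= pos]]].
case/and4P: deg => lt_ij /eqP /= lam_i' /andP [/andP [i'_ge1 _] _] _.
case: pos => ?; subst; first lia.
by have := lam_mono i' j' part i'_ge1 (ltnW lt_ij) i_le; lia.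
Qed.

Lemma Phi_at u sigma : Phi u sigma u.1 u.2 = flip (sigma u.1 u.2).
Proof. by case: u => r i; rewrite /Phi eqxx. Qed.

Lemma Phi_off u sigma r i : (r, i) != u -> Phi u sigma r i = sigma r i.
Proof. by rewrite /Phi => /negbTE ->. Qed.

Section DistinguishedCell.

Variables (la : seq nat) (sigma : filling) (a : nat) (c : nat * nat).
Hypothesis sf : super_filling la sigma.
Hypothesis dlab : distinguished_label la sigma a.
Hypothesis dcell : distinguished_cell la sigma a c.

Lemma label_pos : 0 < a.
Proof. by case: dlab. Qed.

(* Minimality of a: no entry in a row >= a has absolute value below a. *)
Lemma labs_ge_label r j : inDg la r j -> a <= r -> a <= labs (sigma r j).
Proof.
move=> d le_ar; rewrite leqNgt; apply/negP => small.
case: dlab => _ [_ min_a]; apply: (min_a (labs (sigma r j))) => //; first exact: sf.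
by exists r, j; split => //; split => //; lia.
Qed.

Lemma label_lt_row : a < c.1.
Proof.
case: dlab => _ [[r0 [j0 [d0 [l0 lt0]]]] _].
case: dcell => _ [_ first]; have := first (r0, j0) d0 l0.
by rewrite /read_before /=; case: ltnP => //; lia.
Qed.

(* Cells read before c carry no entry of absolute value a, hence a larger one. *)
Lemma labs_gt_label r j : inDg la r j -> read_before (r, j) c -> a < labs (sigma r j).
Proof.
move=> d before; have [_ [_ first]] := dcell.
have ne : labs (sigma r j) != a.
  by apply: contraTneq before => eq_a; exact: first (r, j) d eq_a.
have := label_lt_row; rewrite /read_before /= in before.
have := labs_ge_label r j d; lia.
Qed.

End DistinguishedCell.

Theorem mainTheorem10 (la : seq nat) (sigma : filling) (a : nat)
    (c u : nat * nat) :
  is_partition la ->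
  super_filling la sigma ->
  ~ Phi_trivial la sigma ->
  distinguished_label la sigma a ->
  distinguished_cell la sigma a c ->
  ((~ in_deg_triple la c /\ u = c) \/
   (in_deg_triple la c /\ in_deg_segment la c.1 u /\
      labs (sigma u.1 u.2) = a)) ->
  forall r i j, ndTriple la r i j -> ndTriple_contains r i j u ->
    quinv_nd (Phi u sigma) r i j = quinv_nd sigma r i j.
Proof.
move=> part sf _ dlab dcell choice r i j /and4P [lt_ij d_top d_mid d_right].
have a_pos := label_pos dlab; have a_lt := label_lt_row dlab dcell.
have [row_u labs_u] : u.1 = c.1 /\ labs (sigma u.1 u.2) = a.
  by case: choice => [[_ ->]|[_ [[]]]]; last split; case: dcell => _ [].
have ge := labs_ge_label sf dlab; have gt := labs_gt_label sf dlab dcell.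
rewrite /quinv_nd; case/orP => [/orP []|] /eqP u_eq; subst u => /=;
  rewrite /= in row_u labs_u; rewrite Phi_at ?Phi_off /=;
  try by rewrite xpair_eqE; lia.
- apply: quinv_flip_top labs_u _ _ => //; apply: ge => //; lia.
- (* u has a cell above it, so it is in no degenerate triple and u = c. *)
  have u_is_c : (r, i) = c.
    by case: choice => [[]|[_ [[_ [_ ?]]]]] //; have := no_deg_triple_below part d_top.
  apply: quinv_flip_mid labs_u _ _ => //; apply: gt => //; rewrite /read_before -u_is_c /=.
  + by rewrite ltnSn.
  + by rewrite eqxx lt_ij orbT.
- apply: quinv_flip_right labs_u _ _ => //; last by apply: ge => //; lia.
  by apply: gt => //; rewrite /read_before /=; lia.
Qed.
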